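(* Let $H \le G$ be finite groups and let $[H,K]$ be the bottom interval of $[H,G]$. If $[H,K]$ is linearly primitive (i.e. there is an irreducible complex representation $U$ of $K$ with $K_{(U^H)} = H$), then $[H,G]$ is linearly primitive.
   Context: The interval $[H,G]$ is the lattice of subgroups $L$ with $H \le L \le G$ (meet = intersection, join = generated subgroup); its atoms are its minimal elements strictly above $H$, and its bottom interval is $[H,K]$ with $K$ the join of all atoms. For a group $L$ acting linearly on $V$, $M \le L$ and a subspace $X$: $V^M = \{v : mv = v \ \forall m \in M\}$ and $L_{(X)} = \{l \in L : lx = x \ \forall x \in X\}$. An interval $[H,G]$ of finite groups is linearly primitive if there is an irreducible complex representation $V$ of $G$ with $G_{(V^H)} = H$. *)

From HB Require Import structures.
From mathcomp Require Import all_boot all_order all_algebra all_fingroup all_solvable all_field all_character.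
Set Implicit Arguments. Unset Strict Implicit. Unset Printing Implicit Defensive.
Import GroupScope.

Definition is_atom (gT : finGroupType) (H G L : {group gT}) : bool :=
  [&& H \proper L, L \subset G &
      [forall M : {group gT}, ((H \proper M) && (M \subset L)) ==> (M == L)]].

(* The top K of the bottom interval [H, K]: the join of all atoms
   (equal to H when there is no atom, i.e. the empty join in [H,G]). *)
Definition bottom_top (gT : finGroupType) (H G : {group gT}) : {group gT} :=
  (<< H :|: \bigcup_(L : {group gT} | is_atom H G L) L >>)%G.

(* Here rfix_mx rG H is a
   matrix whose row space is V^H, and rstab rG U is the set of g in G fixing
   every row of U (hence every vector of the row space of U). *)
Definition linearly_primitive (gT : finGroupType) (H G : {group gT}) : Prop :=
  exists n (rG : mx_representation algC G n),
    mx_irreducible rG /\ rstab rG (rfix_mx rG H) = H.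

From mathcomp Require Import all_boot all_order all_algebra all_fingroup all_solvable all_field all_character.
Set Implicit Arguments. Unset Strict Implicit. Unset Printing Implicit Defensive.
Import GroupScope GRing.Theory Num.Theory.
Local Open Scope ring_scope.

(* Let U be an irreducible representation of K with K_(U^H) = H.  By Frobenius
   reciprocity U embeds K-equivariantly into the restriction of some
   irreducible representation V of G; the embedding maps U^H into V^H, so
   K meets G_(V^H) inside K_(U^H) = H.  Every subgroup strictly above H
   contains an atom of [H,G], and atoms lie in K, so G_(V^H) = H. *)

Section BottomInterval.

Variables (gT : finGroupType) (H G : {group gT}).

Lemma sub_bottom_top : H \subset bottom_top H G.
Proof. exact: subset_trans (subsetUl _ _) (sub_gen _). Qed.

Lemma atom_sub_bottom_top (L : {group gT}) :
  is_atom H G L -> L \subset bottom_top H G.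
Proof.
move=> atomL.
have sLU : L \subset \bigcup_(L0 : {group gT} | is_atom H G L0) L0 := bigcup_sup L atomL.
exact: subset_trans sLU (subset_trans (subsetUr H _) (sub_gen _)).
Qed.

Lemma bottom_top_sub : H \subset G -> bottom_top H G \subset G.
Proof.
move=> sHG; rewrite gen_subG subUset sHG /=.
by apply/bigcupsP => L /and3P[].
Qed.

Lemma bottom_top_meet_eq (M : {group gT}) :
  H \subset M -> M \subset G -> M :&: bottom_top H G \subset H -> M :=: H.
Proof.
move=> sHM sMG sMK_H; apply/eqP; rewrite eqEsubset andbC sHM /=.
apply/negPn/negP => nsMH.
have pHM : H \proper M by rewrite properE sHM nsMH.
have [L /mingroupP[pHL minL] sLM] :=
  mingroup_exists (gP := fun N : {group gT} => H \proper N) pHM.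
have atomL : is_atom H G L.
  rewrite /is_atom pHL (subset_trans sLM sMG) /=.
  apply/forallP => N; apply/implyP => /andP[pHN sNL].
  by apply/eqP/val_inj/minL.
have sLH : L \subset H.
  by apply: subset_trans sMK_H; rewrite subsetI sLM atom_sub_bottom_top.
by rewrite properE sLH andbF in pHL.
Qed.

End BottomInterval.

Section Embedding.

Variables (F : fieldType) (gT : finGroupType) (H K G : {group gT}).
Variables (m n : nat) (rU : mx_representation F K m).
Variables (rV : mx_representation F G n) (f : 'M[F]_(m, n)).
Hypotheses (sHK : H \subset K) (free_f : row_free f).
Hypothesis hom_f : forall x, x \in K -> rU x *m f = f *m rV x.

Lemma rfix_mx_hom : (rfix_mx rU H *m f <= rfix_mx rV H)%MS.
Proof.
apply/rfix_mxP => h Hh.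
by rewrite -mulmxA -hom_f ?(subsetP sHK) // mulmxA rfix_mx_id.
Qed.

Lemma rstab_rfix_hom :
  K :&: rstab rV (rfix_mx rV H) \subset rstab rU (rfix_mx rU H).
Proof.
apply/subsetP => x /setIP[Kx /setIdP[_ /eqP fix_x]].
rewrite inE Kx /=; apply/eqP/(row_free_inj free_f).
have [D WfE] := submxP rfix_mx_hom.
by rewrite -mulmxA hom_f // mulmxA WfE -mulmxA fix_x.
Qed.

End Embedding.

Lemma rsim_dadd_embed (F : fieldType) (gT : finGroupType) (K : {group gT})
    (m n : nat) (rU : mx_representation F K m) (rT : representation F K)
    (rV : mx_representation F K n) :
  mx_rsim (dadd_grepr (Representation rU) rT) rV ->
  exists2 f : 'M_(m, n), row_free f & forall x, x \in K -> rU x *m f = f *m rV x.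
Proof.
case=> B _ freeB defB; exists (row_mx 1%:M 0 *m B).
  rewrite /row_free mxrankMfree //; apply/row_freeP.
  by exists (col_mx 1%:M 0); rewrite mul_row_col mulmx1 mulmx0 addr0.
move=> x Kx; rewrite mulmxA mul_mx_row mulmx1 mulmx0.
have -> : row_mx (rU x) 0 = row_mx 1%:M 0 *m block_mx (rU x) 0 0 (rT x).
  by rewrite mul_row_block !mul1mx !mul0mx !addr0.
by rewrite -mulmxA (defB x Kx) mulmxA.
Qed.

Lemma irr_repr_embeds_in_Res (gT : finGroupType) (K G : {group gT}) (m : nat)
    (rU : mx_representation algC K m) :
  K \subset G -> mx_irreducible rU ->
  exists n (rV : mx_representation algC G n),
    mx_irreducible rV /\
    exists2 f : 'M_(m, n), row_free f &
      forall x, x \in K -> rU x *m f = f *m rV x.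
Proof.
move=> sKG irrU.
have irr_psi : cfRepr rU \in irr K by apply/irr_reprP; exists (Representation rU).
pose j := cfIirr (cfRepr rU).
have psiE : 'chi_j = cfRepr rU := cfIirrE irr_psi.
have /neq0_has_constt[i] : 'Ind[G] 'chi_j != 0 by rewrite cfInd_eq0 ?irr_char ?irr_neq0.
rewrite irr_consttE -Frobenius_reciprocity => ij.
have Nres : 'Res[K] 'chi[G]_i \is a character by rewrite cfRes_char ?irr_char.
have /(constt_charP j Nres)[chi' /char_reprP[rT chi'E] resE] :
    j \in irr_constt ('Res[K] 'chi_i) by rewrite irr_consttE cfdotC conjC_eq0.
have /irr_reprP[[n rV] irrV chiE] := mem_irr i.
exists n, rV; split=> //.
apply: (@rsim_dadd_embed _ _ _ _ _ rU rT (subg_repr rV sKG)).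
by apply/cfRepr_rsimP; rewrite cfRepr_dadd cfRepr_sub -chiE resE psiE chi'E.
Qed.

Theorem lemma3p12 (gT : finGroupType) (H G : {group gT}) :
  H \subset G ->
  linearly_primitive H (bottom_top H G) ->
  linearly_primitive H G.
Proof.
move=> sHG [m [rU [irrU stabU]]].
have [n [rV [irrV [f free_f hom_f]]]] :=
  irr_repr_embeds_in_Res (bottom_top_sub sHG) irrU.
exists n, rV; split=> //.
apply: (bottom_top_meet_eq (G := G)); rewrite ?rstab_sub ?rfix_mx_rstabC //.
rewrite setIC; apply: subset_trans (rstab_rfix_hom _ free_f hom_f) _.
  exact: sub_bottom_top.
by rewrite stabU.
Qed.
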